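(* Let $N\ge 1$, $l>0$, $\Delta\tau>0$, $L>(N+1)l$ and $v_{0,\min}\le v_{0,\max}$, and consider the platoon system with state $y=(\tilde x_1,\tilde v_1,\dots,\tilde x_N,\tilde v_N,v_0)\in\mathbb{R}^{2N+1}$, input $u=(u_0,\dots,u_N)\in\mathbb{U}$ and disturbance $w\in\mathbb{W}$: $$\tilde x_i^+=\tilde x_i+\tilde v_i\Delta\tau+(u_0-u_i)\tfrac{\Delta\tau^2}{2}+w_{0,x}-w_{i,x},\quad \tilde v_i^+=\tilde v_i+(u_0-u_i)\Delta\tau+w_{0,v}-w_{i,v}\ (i=1,\dots,N),\quad v_0^+=v_0+u_0\Delta\tau+w_{0,v}.$$ Let $\Omega_0,\dots,\Omega_N$, $I_0,\dots,I_N$, $J_{i,x},J_{i,v}$ be as in the context, and let $\mu_i:\Omega_i\to I_i$ ($i=1,\dots,N$) and $\mu_0:\Omega_0\to I_0$ be invariance-inducing maps as defined in the context. Define, on $\Omega=\{y:(\tilde x_i,\tilde v_i)\in\Omega_i\ (i=1,\dots,N),\ v_0\in\Omega_0\}$, the feedback $u=\mu(y)$ by $u_0=\mu_0(v_0)$ and $u_i=\mu_0(v_0)-\mu_i(\tilde x_i,\tilde v_i)$ for $i=1,\dots,N$. Then $\mu(y)\in\mathbb{U}$ for all $y\in\Omega$, and for every initial state $y(0)\in\Omega$ and every disturbance sequence $(w(k))_{k\ge0}$ with $w(k)\in\mathbb{W}$, the closed-loop trajectory $y(k+1)=$ (platoon update with $u=\mu(y(k))$, $w=w(k)$) satisfies,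 for all $k\ge 0$: $\tilde x_i(k)\ge\tilde x_{i-1}(k)+l$ for $i=1,\dots,N$ (with $\tilde x_0:=0$), $\tilde x_N(k)\le L$, and $v_0(k)\in[v_{0,\min},v_{0,\max}]$. That is, $\mu$ solves the safe platoon control problem (belongs to the set $\mathbb{M}$ of control policies guaranteeing these constraints for all times and all admissible disturbances).
   Context: A platoon consists of $N+1$ vehicles indexed $0$ (the leader) to $N$, all of length $l$. Vehicle $i$ has absolute position $x_i$, velocity $v_i$, control input $u_i$ and additive disturbances $w_{i,x},w_{i,v}$, with dynamics $x_i^+=x_i+v_i\Delta\tau+u_i\frac{\Delta\tau^2}{2}+w_{i,x}$, $v_i^+=v_i+u_i\Delta\tau+w_{i,v}$. Admissible inputs: $\mathbb{U}=\prod_{i=0}^N[u_{i,\min},u_{i,\max}]$; admissible disturbances: $w=(w_{i,s})\in\mathbb{W}=\prod_{i=0}^N[w_{i,x,\min},w_{i,x,\max}]\times[w_{i,v,\min},w_{i,v,\max}]$. Relative coordinates are $\tilde x_i=x_0-x_i$, $\tilde v_i=v_0-v_i$. Envelope sets: for $i=1,\dots,N$, $\mathbb{S}_i=\{(\tilde x_i,\tilde v_i)\in\mathbb{R}^2 : il+(i-1)\frac{L-Nl}{N}\le\tilde x_i\le il+i\frac{L-Nl}{N}\}$, and $\mathbb{S}_0=[v_{0,\min},v_{0,\max}]$. Relative inputs and disturbances: $\tilde u_0=u_0$, $\tilde u_i=u_0-u_i$, $\tilde w_{0,s}=w_{0,s}$, $\tilde w_{i,s}=w_{0,s}-w_{i,s}$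 ($s=x,v$). Let $\mathcal{U}=\{\tilde u:u\in\mathbb{U}\}$, $\mathcal{W}=\{\tilde w:w\in\mathbb{W}\}$. $\prod_{i=0}^N I_i$ is any hyper-rectangle contained in $\mathcal{U}$, and $\prod_{i=0}^N J_{i,x}\times J_{i,v}$ is any hyper-rectangle containing $\mathcal{W}$. For $i=1,\dots,N$, $\Omega_i\subseteq\mathbb{S}_i$, and $\mu_i:\Omega_i\to I_i$ satisfies: for every $(\tilde x,\tilde v)\in\Omega_i$, with $\tilde u=\mu_i(\tilde x,\tilde v)$, one has $(\tilde x+\tilde v\Delta\tau+\tilde u\frac{\Delta\tau^2}{2}+\omega_x,\ \tilde v+\tilde u\Delta\tau+\omega_v)\in\Omega_i$ for all $\omega_x\in J_{i,x}$, $\omega_v\in J_{i,v}$. Also $\Omega_0\subseteq\mathbb{S}_0$ and $\mu_0:\Omega_0\to I_0$ satisfies $v+\mu_0(v)\Delta\tau+\omega\in\Omega_0$ for all $v\in\Omega_0$ and all $\omega\in[w_{0,v,\min},w_{0,v,\max}]$. *)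

From Stdlib Require Import Reals Lra Lia.
Open Scope R_scope.

(* Vehicles are indexed by nat; only indices 0..N are meaningful.
   State y = (xt_1,vt_1,...,xt_N,vt_N,v0): components xt i, vt i for 1<=i<=N
   (values at other indices are irrelevant and never constrained/used). *)
Record pstate := mkState { xt : nat -> R; vt : nat -> R; v0 : R }.

Definition InU (N : nat) (umin umax : nat -> R) (u : nat -> R) : Prop :=
  forall i, (i <= N)%nat -> umin i <= u i <= umax i.

Definition InW (N : nat) (wxmin wxmax wvmin wvmax : nat -> R)
  (wx wv : nat -> R) : Prop :=
  forall i, (i <= N)%nat ->
    wxmin i <= wx i <= wxmax i /\ wvmin i <= wv i <= wvmax i.

Definition rel (a : nat -> R) : nat -> R :=
  fun i => match i with O => a O | _ => a O - a i end.

Definition InUrel (N : nat) (umin umax : nat -> R) (ut : nat -> R) : Prop :=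
  exists u, InU N umin umax u /\ forall i, (i <= N)%nat -> ut i = rel u i.

Definition is_interval (S : R -> Prop) : Prop :=
  forall a b c, S a -> S c -> a <= b <= c -> S b.

Definition Senv (N : nat) (l L : R) (i : nat) (z : R * R) : Prop :=
  INR i * l + (INR i - 1) * ((L - INR N * l) / INR N) <= fst z <=
  INR i * l + INR i * ((L - INR N * l) / INR N).

Definition step (dt : R) (y : pstate) (u wx wv : nat -> R) : pstate :=
  mkState
    (fun i => xt y i + vt y i * dt + (u O - u i) * (dt ^ 2 / 2) + wx O - wx i)
    (fun i => vt y i + (u O - u i) * dt + wv O - wv i)
    (v0 y + u O * dt + wv O).

Definition mu_fb (mu0 : R -> R) (mu : nat -> R * R -> R) (y : pstate)
  : nat -> R :=
  fun i => match i with
           | O => mu0 (v0 y)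
           | _ => mu0 (v0 y) - mu i (xt y i, vt y i)
           end.

Definition InOmega (N : nat) (Omega : nat -> R * R -> Prop)
  (Omega0 : R -> Prop) (y : pstate) : Prop :=
  (forall i, (1 <= i <= N)%nat -> Omega i (xt y i, vt y i)) /\ Omega0 (v0 y).

Fixpoint traj (dt : R) (mu0 : R -> R) (mu : nat -> R * R -> R)
  (y0 : pstate) (wxs wvs : nat -> nat -> R) (k : nat) : pstate :=
  match k with
  | O => y0
  | S k' => let y := traj dt mu0 mu y0 wxs wvs k' in
            step dt y (mu_fb mu0 mu y) (wxs k') (wvs k')
  end.

Definition xprev (y : pstate) (i : nat) : R :=
  if Nat.eqb i 1 then 0 else xt y (i - 1).

Definition safe (N : nat) (l L v0min v0max : R) (y : pstate) : Prop :=
  (forall i, (1 <= i <= N)%nat -> xt y i >= xprev y i + l) /\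
  xt y N <= L /\ v0min <= v0 y <= v0max.

From Pilot Require Import Defs.
From Stdlib Require Import Reals Lra Lia.
Open Scope R_scope.

(** In relative coordinates the closed loop decouples: the feedback makes the
    relative input of vehicle [i] exactly [mu_i (xt_i, vt_i)] (and [mu_0 v_0]
    for the leader), while the relative disturbance of vehicle [i] lies in
    [J_i].  Hence each [Omega_i] is forward invariant and the trajectory never
    leaves [Omega], a subset of the envelope sets.  Consecutive envelope sets
    are [l] apart and the last one ends at [L], which gives the spacing and
    length constraints.  Admissibility of the input holds because the relative
    feedback lies in [prod_i I_i], a subset of the image of [U] under the
    involution [rel]. *)

Lemma rel_involutive (a : nat -> R) (i : nat) : rel (rel a) i = a i.
Proof. destruct i; simpl; ring. Qed.

Lemma rel_ext (N : nat) (a b : nat -> R) (i : nat) :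
  (forall j, (j <= N)%nat -> a j = b j) -> (i <= N)%nat -> rel a i = rel b i.
Proof.
  intros Hab Hi.
  destruct i as [|j]; simpl; rewrite (Hab 0%nat) by lia; [reflexivity|].
  now rewrite (Hab (S j)).
Qed.

Lemma InU_rel (N : nat) (umin umax ut : nat -> R) :
  InUrel N umin umax ut -> InU N umin umax (rel ut).
Proof.
  intros [u [Hu Hut]] i Hi.
  rewrite (rel_ext N ut (rel u) i Hut Hi), rel_involutive.
  now apply Hu.
Qed.

Definition mu_rel (mu0 : R -> R) (mu : nat -> R * R -> R) (y : pstate)
  : nat -> R :=
  fun i => match i with
           | O => mu0 (v0 y)
           | _ => mu i (Defs.xt y i, vt y i)
           end.

Lemma mu_fb_rel (mu0 : R -> R) (mu : nat -> R * R -> R) (y : pstate) (i : nat) :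
  mu_fb mu0 mu y i = rel (mu_rel mu0 mu y) i.
Proof. now destruct i. Qed.

Lemma rel_mu_fb (mu0 : R -> R) (mu : nat -> R * R -> R) (y : pstate) (i : nat) :
  rel (mu_fb mu0 mu y) i = mu_rel mu0 mu y i.
Proof. destruct i; simpl; ring. Qed.

Lemma step_xt (dt : R) (y : pstate) (u wx wv : nat -> R) (i : nat) :
  (1 <= i)%nat ->
  Defs.xt (step dt y u wx wv) i
  = Defs.xt y i + vt y i * dt + rel u i * (dt ^ 2 / 2) + rel wx i.
Proof. intros Hi; destruct i as [|i]; [lia|]. simpl; ring. Qed.

Lemma step_vt (dt : R) (y : pstate) (u wx wv : nat -> R) (i : nat) :
  (1 <= i)%nat ->
  vt (step dt y u wx wv) i = vt y i + rel u i * dt + rel wv i.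
Proof. intros Hi; destruct i as [|i]; [lia|]. simpl; ring. Qed.

Section Closed_loop.

Variables (N : nat) (dt : R) (umin umax wxmin wxmax wvmin wvmax : nat -> R)
  (I Jx Jv : nat -> R -> Prop)
  (Omega : nat -> R * R -> Prop) (Omega0 : R -> Prop)
  (mu : nat -> R * R -> R) (mu0 : R -> R).

Hypothesis mu_invariant : forall i, (1 <= i <= N)%nat -> forall z, Omega i z ->
  I i (mu i z) /\
  forall wx wv, Jx i wx -> Jv i wv ->
    Omega i (fst z + snd z * dt + mu i z * (dt ^ 2 / 2) + wx,
             snd z + mu i z * dt + wv).

Hypothesis mu0_invariant : forall v, Omega0 v ->
  I O (mu0 v) /\
  forall w, wvmin O <= w <= wvmax O -> Omega0 (v + mu0 v * dt + w).

Lemma mu_fb_admissible :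
  (forall ut, (forall i, (i <= N)%nat -> I i (ut i)) -> InUrel N umin umax ut) ->
  forall y, InOmega N Omega Omega0 y -> InU N umin umax (mu_fb mu0 mu y).
Proof.
  intros I_sub_U y [Hxv Hv0] i Hi.
  rewrite mu_fb_rel.
  refine (InU_rel N umin umax _ _ i Hi).
  apply I_sub_U; intros [|j] Hj.
  - exact (proj1 (mu0_invariant _ Hv0)).
  - exact (proj1 (mu_invariant (S j) ltac:(lia) _ (Hxv (S j) ltac:(lia)))).
Qed.

Hypothesis W_sub_J : forall wx wv, InW N wxmin wxmax wvmin wvmax wx wv ->
  forall i, (i <= N)%nat -> Jx i (rel wx i) /\ Jv i (rel wv i).

Lemma InOmega_step (y : pstate) (wx wv : nat -> R) :
  InOmega N Omega Omega0 y -> InW N wxmin wxmax wvmin wvmax wx wv ->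
  InOmega N Omega Omega0 (step dt y (mu_fb mu0 mu y) wx wv).
Proof.
  intros [Hxv Hv0] Hw; split.
  - intros i Hi.
    rewrite step_xt, step_vt, rel_mu_fb by lia.
    destruct i as [|j]; [lia|].
    destruct (W_sub_J wx wv Hw (S j) ltac:(lia)) as [Hjx Hjv].
    exact (proj2 (mu_invariant (S j) Hi _ (Hxv (S j) Hi)) _ _ Hjx Hjv).
  - exact (proj2 (mu0_invariant _ Hv0) _ (proj2 (Hw O ltac:(lia)))).
Qed.

Lemma InOmega_traj (y0 : pstate) (wxs wvs : nat -> nat -> R) (k : nat) :
  InOmega N Omega Omega0 y0 ->
  (forall k, InW N wxmin wxmax wvmin wvmax (wxs k) (wvs k)) ->
  InOmega N Omega Omega0 (traj dt mu0 mu y0 wxs wvs k).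
Proof.
  intros Hy0 Hw; induction k as [|k IH]; [exact Hy0|].
  now apply InOmega_step.
Qed.

End Closed_loop.

Lemma Senv_1_ge (N : nat) (l L : R) (z : R * R) :
  Senv N l L 1 z -> l <= fst z.
Proof. unfold Senv; simpl; lra. Qed.

Lemma Senv_S_gap (N : nat) (l L : R) (i : nat) (z z' : R * R) :
  Senv N l L i z -> Senv N l L (S i) z' -> fst z + l <= fst z'.
Proof. unfold Senv; rewrite S_INR; nra. Qed.

Lemma Senv_N_le (N : nat) (l L : R) (z : R * R) :
  (1 <= N)%nat -> Senv N l L N z -> fst z <= L.
Proof.
  intros HN; unfold Senv.
  assert (0 < INR N) by (apply lt_0_INR; lia).
  replace (INR N * l + INR N * ((L - INR N * l) / INR N)) with L
    by (field; lra).
  lra.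
Qed.

Lemma safe_of_InOmega (N : nat) (l L v0min v0max : R)
  (Omega : nat -> R * R -> Prop) (Omega0 : R -> Prop) (y : pstate) :
  (1 <= N)%nat ->
  (forall i, (1 <= i <= N)%nat -> forall z, Omega i z -> Senv N l L i z) ->
  (forall v, Omega0 v -> v0min <= v <= v0max) ->
  InOmega N Omega Omega0 y -> safe N l L v0min v0max y.
Proof.
  intros HN HOS HO0 [Hxv Hv0].
  assert (HS : forall i, (1 <= i <= N)%nat -> Senv N l L i (Defs.xt y i, vt y i))
    by (intros i Hi; exact (HOS i Hi _ (Hxv i Hi))).
  split; [|split].
  - intros [|[|j]] Hi; [lia| |]; unfold xprev; simpl.
    + pose proof (Senv_1_ge _ _ _ _ (HS 1%nat Hi)); simpl in *; lra.
    + pose proof (Senv_S_gap _ _ _ _ _ _ (HS (S j) ltac:(lia)) (HS (S (S j)) Hi)).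
      simpl in *; lra.
  - exact (Senv_N_le _ _ _ _ HN (HS N ltac:(lia))).
  - exact (HO0 _ Hv0).
Qed.

Theorem proposition3
  (N : nat) (l dt L v0min v0max : R)
  (umin umax wxmin wxmax wvmin wvmax : nat -> R)
  (I Jx Jv : nat -> R -> Prop)
  (Omega : nat -> R * R -> Prop) (Omega0 : R -> Prop)
  (mu : nat -> R * R -> R) (mu0 : R -> R) :
  (1 <= N)%nat -> 0 < l -> 0 < dt -> INR (N + 1) * l < L -> v0min <= v0max ->
  (* prod_i I_i is a hyper-rectangle contained in script U *)
  (forall i, (i <= N)%nat -> is_interval (I i)) ->
  (forall ut, (forall i, (i <= N)%nat -> I i (ut i)) -> InUrel N umin umax ut) ->
  (* prod_i J_{i,x} x J_{i,v} is a hyper-rectangle containing script W *)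
  (forall i, (i <= N)%nat -> is_interval (Jx i) /\ is_interval (Jv i)) ->
  (forall wx wv, InW N wxmin wxmax wvmin wvmax wx wv ->
     forall i, (i <= N)%nat -> Jx i (rel wx i) /\ Jv i (rel wv i)) ->
  (* Omega_i subset of S_i, and mu_i : Omega_i -> I_i invariance-inducing *)
  (forall i, (1 <= i <= N)%nat -> forall z, Omega i z -> Senv N l L i z) ->
  (forall i, (1 <= i <= N)%nat -> forall z, Omega i z ->
     I i (mu i z) /\
     forall wx wv, Jx i wx -> Jv i wv ->
       Omega i (fst z + snd z * dt + mu i z * (dt ^ 2 / 2) + wx,
                snd z + mu i z * dt + wv)) ->
  (* Omega_0 subset of S_0, and mu_0 : Omega_0 -> I_0 invariance-inducing *)
  (forall v, Omega0 v -> v0min <= v <= v0max) ->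
  (forall v, Omega0 v ->
     I O (mu0 v) /\
     forall w, wvmin O <= w <= wvmax O -> Omega0 (v + mu0 v * dt + w)) ->
  (forall y, InOmega N Omega Omega0 y -> InU N umin umax (mu_fb mu0 mu y)) /\
  (forall (y0 : pstate) (wxs wvs : nat -> nat -> R),
     InOmega N Omega Omega0 y0 ->
     (forall k, InW N wxmin wxmax wvmin wvmax (wxs k) (wvs k)) ->
     forall k, safe N l L v0min v0max (traj dt mu0 mu y0 wxs wvs k)).
Proof.
  intros HN _ _ _ _ _ I_sub_U _ W_sub_J Omega_sub_S mu_inv Omega0_sub_S0 mu0_inv.
  split.
  - eapply mu_fb_admissible; eassumption.
  - intros y0 wxs wvs Hy0 Hw k.
    apply (safe_of_InOmega N l L v0min v0max Omega Omega0); try assumption.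
    eapply InOmega_traj; eassumption.
Qed.
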